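(* Let $(\mathfrak{g},V,\Theta)$ be a Lie-Leibniz triple, let $\mathfrak{h}=\mathrm{Im}(\Theta)$, and let $(T_{\leq-1},\llbracket\,.\,,.\,\rrbracket)$ be its associated negatively graded Lie algebra. Then there exists a unique family of $\mathfrak{h}$-equivariant linear maps $\partial=(\partial_{-i}:T_{-i-1}\to T_{-i})_{i\geq1}$ (a degree $+1$ map, extended as a graded derivation of $\Lambda^\bullet(T_{\leq-1})$) such that $\partial\llbracket u,v\rrbracket=2\{u,v\}$, $\partial\llbracket u,x\rrbracket=\Theta(u)\cdot x-\llbracket u,\partial(x)\rrbracket$, $\partial\llbracket x,y\rrbracket=\llbracket\partial(x),y\rrbracket+(-1)^{|x|}\llbracket x,\partial(y)\rrbracket$ for all $u,v\in T_{-1}$ and $x,y\in T_{\leq-2}$. Moreover $\partial_{-i}\circ\partial_{-i-1}=0$ for every $i\geq1$.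
   Context: A (left) Leibniz algebra is a vector space $V$ with bilinear $\circ$ satisfying $x\circ(y\circ z)=(x\circ y)\circ z+y\circ(x\circ z)$; $\{x,y\}=\frac12(x\circ y+y\circ x)$. A Lie-Leibniz triple $(\mathfrak{g},V,\Theta)$ consists of a Lie algebra $\mathfrak{g}$, a $\mathfrak{g}$-module $V$ (action $a\cdot x$) with a Leibniz product $\circ$, and a linear map $\Theta:V\to\mathfrak{g}$ with $x\circ y=\Theta(x)\cdot y$ and $\Theta(x\circ y)=[\Theta(x),\Theta(y)]$. Associated graded Lie algebra: let $K$ be the largest $\mathfrak{g}$-submodule of $S^2(V)$ contained in the kernel of $S^2(V)\to V$, $x\odot y\mapsto\{x,y\}$. Let $F=\bigoplus_{i\geq1}F_{-i}$ be the free graded Lie algebra generated by $V[1]$ (a copy of $V$ in degree $-1$); identify $F_{-2}$ with $S^2(V)$ via $[x,y]\leftrightarrow x\odot y$, and let $\mathfrak g$ act on $F$ by the unique derivations extending its action on $V$. Put $K_{-2}=K$ and $K_{-i}=\sum_{j=1}^{i-2}[F_{-j},K_{-i+j}]$ for $i\geq3$; $K_\bullet$ is a graded Lie ideal and $\mathfrak{g}$-submodule of $F$. Define $T_{-1}=V[1]$, $T_{-i}=F_{-i}/K_{-i}$ ($i\ge2$), $T_{\leq-1}=F/K_\bullet$ with the induced bracket $\llbracket\,.\,,.\,\rrbracket$ and $\mathfrak{g}$-action. $\mathfrak{h}$-equivariance of $\partial_{-i}$ means $\partial_{-i}(a\cdot x)=a\cdot\partial_{-i}(x)$ for $a\in\mathfrak{h}$.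 Here $T_{\leq -2}=\bigoplus_{i\ge2}T_{-i}$. *)

From HB Require Import structures.
From mathcomp Require Import all_boot all_order all_algebra.
Set Implicit Arguments.
Unset Strict Implicit.
Unset Printing Implicit Defensive.
Import GRing.Theory.
Local Open Scope ring_scope.

Definition linear_map (K : fieldType) (A B : lmodType K) (f : A -> B) : Prop :=
  forall (c : K) x y, f (c *: x + y) = c *: f x + f y.

Definition bilinear_map (K : fieldType) (A B C : lmodType K) (f : A -> B -> C) : Prop :=
  (forall (c : K) x x' y, f (c *: x + x') y = c *: f x y + f x' y) /\
  (forall (c : K) x y y', f x (c *: y + y') = c *: f x y + f x y').

Definition is_subspace (K : fieldType) (A : lmodType K) (W : A -> Prop) : Prop :=
  W 0 /\ (forall (c : K) x y, W x -> W y -> W (c *: x + y)).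

Definition is_Lie_algebra (K : fieldType) (g : lmodType K) (br : g -> g -> g) : Prop :=
  bilinear_map br /\ (forall x, br x x = 0) /\
  (forall x y z, br x (br y z) + br y (br z x) + br z (br x y) = 0).

Definition is_Lie_module (K : fieldType) (g V : lmodType K) (brg : g -> g -> g)
  (act : g -> V -> V) : Prop :=
  bilinear_map act /\
  (forall a b x, act (brg a b) x = act a (act b x) - act b (act a x)).

Definition is_Leibniz (K : fieldType) (V : lmodType K) (circ : V -> V -> V) : Prop :=
  bilinear_map circ /\
  (forall x y z, circ x (circ y z) = circ (circ x y) z + circ y (circ x z)).

Definition is_Lie_Leibniz_triple (K : fieldType) (g V : lmodType K)
  (brg : g -> g -> g) (act : g -> V -> V) (circ : V -> V -> V) (Theta : V -> g) : Prop :=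
  is_Lie_algebra brg /\ is_Lie_module brg act /\ is_Leibniz circ /\ linear_map Theta /\
  (forall x y, circ x y = act (Theta x) y) /\
  (forall x y, Theta (circ x y) = brg (Theta x) (Theta y)).

Definition sym_bracket (K : fieldType) (V : lmodType K) (circ : V -> V -> V) (x y : V) : V :=
  (2 : K)^-1 *: (circ x y + circ y x).

(* A graded vector space L = (+)_{i >= 1} L_{-i}; the component of degree -i is
   the subspace G i (G 0 is trivial). *)
Definition is_neg_grading (K : fieldType) (L : lmodType K) (G : nat -> L -> Prop) : Prop :=
  [/\ (forall i, is_subspace (G i)),
      (forall x, G 0%N x -> x = 0),
      (forall x, exists n (xs : nat -> L), (forall i, G i (xs i)) /\ x = \sum_(i < n) xs i) &
      (forall n (xs : nat -> L), (forall i, G i (xs i)) -> \sum_(i < n) xs i = 0 ->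
          forall i, (i < n)%N -> xs i = 0)].

Definition is_neg_graded_Lie (K : fieldType) (L : lmodType K) (br : L -> L -> L)
  (G : nat -> L -> Prop) : Prop :=
  [/\ is_neg_grading G, bilinear_map br,
      (forall i j x y, G i x -> G j y -> G (i + j)%N (br x y)),
      (forall i j x y, G i x -> G j y -> br x y = - (((-1 : K) ^+ (i * j)) *: br y x)) &
      (forall i j x y z, G i x -> G j y ->
         br x (br y z) = br (br x y) z + ((-1 : K) ^+ (i * j)) *: br y (br x z))].

Definition graded_Lie_morphism (K : fieldType) (L M : lmodType K)
  (brL : L -> L -> L) (GL : nat -> L -> Prop) (brM : M -> M -> M) (GM : nat -> M -> Prop)
  (phi : L -> M) : Prop :=
  [/\ linear_map phi,
      (forall x y, phi (brL x y) = brM (phi x) (phi y)) &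
      (forall i x, GL i x -> GM i (phi x))].

Definition is_free_graded_Lie (K : fieldType) (V F : lmodType K) (brF : F -> F -> F)
  (GF : nat -> F -> Prop) (iota : V -> F) : Prop :=
  [/\ is_neg_graded_Lie brF GF, linear_map iota, (forall v, GF 1%N (iota v)) &
      forall (M : lmodType K) (brM : M -> M -> M) (GM : nat -> M -> Prop),
        is_neg_graded_Lie brM GM ->
        forall f : V -> M, linear_map f -> (forall v, GM 1%N (f v)) ->
        exists phi : F -> M,
          [/\ graded_Lie_morphism brF GF brM GM phi,
              (forall v, phi (iota v) = f v) &
              (forall psi : F -> M, graded_Lie_morphism brF GF brM GM psi ->
                 (forall v, psi (iota v) = f v) -> forall x, psi x = phi x)]].

Definition derivation_extension (K : fieldType) (g V F : lmodType K) (act : g -> V -> V)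
  (brF : F -> F -> F) (GF : nat -> F -> Prop) (iota : V -> F) (rhoF : g -> F -> F) : Prop :=
  forall a, [/\ linear_map (rhoF a),
                (forall x y, rhoF a (brF x y) = brF (rhoF a x) y + brF x (rhoF a y)),
                (forall i x, GF i x -> GF i (rhoF a x)) &
                (forall v, rhoF a (iota v) = iota (act a v))].

(* w in F_{-2} = S^2(V) lies in the kernel of x (.) y |-> {x,y}
   (identification [x,y] <-> x (.) y) *)
Definition in_sym_kernel (K : fieldType) (V F : lmodType K) (circ : V -> V -> V)
  (brF : F -> F -> F) (iota : V -> F) (w : F) : Prop :=
  exists n (c : 'I_n -> K) (x y : 'I_n -> V),
    w = \sum_(k < n) c k *: brF (iota (x k)) (iota (y k)) /\
    \sum_(k < n) c k *: sym_bracket circ (x k) (y k) = 0.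

(* K = K_{-2}: the largest g-submodule of F_{-2} contained in that kernel *)
Definition K2 (K : fieldType) (g V F : lmodType K) (circ : V -> V -> V)
  (brF : F -> F -> F) (GF : nat -> F -> Prop) (iota : V -> F) (rhoF : g -> F -> F)
  (x : F) : Prop :=
  exists W : F -> Prop,
    [/\ is_subspace W, (forall a w, W w -> W (rhoF a w)),
        (forall w, W w -> GF 2%N w /\ in_sym_kernel circ brF iota w) & W x].

(* Kdeg i = K_{-i}: K_{-2} = K, and for i >= 3, K_{-i} = sum_{j=1}^{i-2} [F_{-j}, K_{-i+j}]
   (the span of the brackets [f,k], f in F_{-j}, k in K_{-m}, j >= 1, m >= 2, j+m = i). *)
Inductive Kdeg (K : fieldType) (g V F : lmodType K) (circ : V -> V -> V)
  (brF : F -> F -> F) (GF : nat -> F -> Prop) (iota : V -> F) (rhoF : g -> F -> F)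
  : nat -> F -> Prop :=
| Kdeg_two x : K2 circ brF GF iota rhoF x -> Kdeg circ brF GF iota rhoF 2%N x
| Kdeg_br j m f k : (1 <= j)%N -> (2 <= m)%N -> GF j f ->
    Kdeg circ brF GF iota rhoF m k -> Kdeg circ brF GF iota rhoF (j + m)%N (brF f k)
| Kdeg_zero i : (3 <= i)%N -> Kdeg circ brF GF iota rhoF i 0
| Kdeg_comb i (c : K) x y : (3 <= i)%N -> Kdeg circ brF GF iota rhoF i x ->
    Kdeg circ brF GF iota rhoF i y -> Kdeg circ brF GF iota rhoF i (c *: x + y).

Definition Kbullet (K : fieldType) (g V F : lmodType K) (circ : V -> V -> V)
  (brF : F -> F -> F) (GF : nat -> F -> Prop) (iota : V -> F) (rhoF : g -> F -> F)
  (x : F) : Prop :=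
  exists n (xs : nat -> F), (forall i, (2 <= i)%N -> Kdeg circ brF GF iota rhoF i (xs i)) /\
    x = \sum_(2 <= i < n) xs i.

Definition is_graded_quotient (K : fieldType) (F T : lmodType K)
  (brF : F -> F -> F) (GF : nat -> F -> Prop) (brT : T -> T -> T) (GT : nat -> T -> Prop)
  (pi : F -> T) (Kset : F -> Prop) : Prop :=
  [/\ graded_Lie_morphism brF GF brT GT pi,
      (forall t, exists x, pi x = t) &
      (forall x, pi x = 0 <-> Kset x)].

(* The conditions on d : T -> T encoding the family (d_{-i} : T_{-i-1} -> T_{-i})_{i>=1}
   (d is taken to vanish on T_{-1}, where the family is not defined).
   u, v in T_{-1} are written pi (iota u0), pi (iota v0) with u0, v0 in V. *)
Definition is_tower_differential (K : fieldType) (g V T : lmodType K)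
  (circ : V -> V -> V) (Theta : V -> g) (brT : T -> T -> T) (GT : nat -> T -> Prop)
  (tau : V -> T) (rhoT : g -> T -> T) (d : T -> T) : Prop :=
  linear_map d /\
      (forall x, GT 1%N x -> d x = 0) /\
      (forall i x, (1 <= i)%N -> GT i.+1 x -> GT i (d x)) /\
      (* h-equivariance, h = Im Theta *)
      (forall w i x, (1 <= i)%N -> GT i.+1 x -> d (rhoT (Theta w) x) = rhoT (Theta w) (d x)) /\
      (forall u v, d (brT (tau u) (tau v)) = tau ((2 : K) *: sym_bracket circ u v)) /\
      (forall u i x, (2 <= i)%N -> GT i x ->
         d (brT (tau u) x) = rhoT (Theta u) x - brT (tau u) (d x)) /\
      (forall i j x y, (2 <= i)%N -> (2 <= j)%N -> GT i x -> GT j y ->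
         d (brT x y) = brT (d x) y + ((-1 : K) ^+ i) *: brT x (d y)).

(* Since [F] is free on [V], a degree [+1] map [D : F -> T] obeying the three
   bracket rules along [pi] is produced by the universal property of [F], applied
   to an auxiliary graded Lie algebra [F (+) T[1] (+) V].  On [K_{-2}] the map [D]
   computes [2 {x, y}], which vanishes there, and it kills every bracket
   [[F_{-j}, K_{-m}]] by induction; so [D] descends to [d] on [T = F / K].  The
   algebra [T] is spanned by iterated brackets of generators, so equivariance,
   uniqueness and [d \o d = 0] follow by induction on brackets.  For the last one
   the point is that [d] maps [T_{-2}] into [pi (iota (ker Theta))], on which
   [Theta] acts trivially, and that the signs of the two Leibniz rules cancel. *)

From HB Require Import structures.
From mathcomp Require Import all_boot all_order all_algebra ssrAC ring.
From Stdlib Require Import ClassicalEpsilon.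
Set Implicit Arguments.
Unset Strict Implicit.
Unset Printing Implicit Defensive.
Import GRing.Theory.
Local Open Scope ring_scope.

Local Notation sgn n := ((-1) ^+ n).

Section LinearAlgebra.
Variable K : fieldType.

Section LinearMap.
Variables (A B : lmodType K) (f : A -> B) (f_lin : linear_map f).

Lemma lin0 : f 0 = 0.
Proof. by have := f_lin (-1) 0 0; rewrite scaler0 addr0 scaleN1r addNr. Qed.
Lemma linD x y : f (x + y) = f x + f y.
Proof. by have := f_lin 1 x y; rewrite !scale1r. Qed.
Lemma linZ c x : f (c *: x) = c *: f x.
Proof. by have := f_lin c x 0; rewrite addr0 lin0 addr0. Qed.
Lemma linN x : f (- x) = - f x.
Proof. by rewrite -scaleN1r linZ scaleN1r. Qed.
Lemma linB x y : f (x - y) = f x - f y.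
Proof. by rewrite linD linN. Qed.
Lemma lin_sum I r (P : pred I) (E : I -> A) :
  f (\sum_(i <- r | P i) E i) = \sum_(i <- r | P i) f (E i).
Proof. exact: (big_morph f linD lin0). Qed.
End LinearMap.

Lemma lin_comp (A B C : lmodType K) (f : A -> B) (h : B -> C) :
  linear_map f -> linear_map h -> linear_map (h \o f).
Proof. by move=> f_lin h_lin c x y /=; rewrite f_lin h_lin. Qed.

Section BilinearMap.
Variables (A B C : lmodType K) (br : A -> B -> C) (br_bil : bilinear_map br).

Lemma bil_linl y : linear_map (br^~ y).
Proof. by move=> c x x'; case: br_bil => + _; apply. Qed.
Lemma bil_linr x : linear_map (br x).
Proof. by move=> c y y'; case: br_bil => _; apply. Qed.
Lemma bil0l y : br 0 y = 0. Proof. exact: (lin0 (bil_linl y)). Qed.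
Lemma bil0r x : br x 0 = 0. Proof. exact: (lin0 (bil_linr x)). Qed.
Lemma bilDl x x' y : br (x + x') y = br x y + br x' y.
Proof. exact: (linD (bil_linl y)). Qed.
Lemma bilDr x y y' : br x (y + y') = br x y + br x y'. Proof. exact: (linD (bil_linr x)). Qed.
Lemma bilZl c x y : br (c *: x) y = c *: br x y. Proof. exact: (linZ (bil_linl y)). Qed.
Lemma bilZr c x y : br x (c *: y) = c *: br x y. Proof. exact: (linZ (bil_linr x)). Qed.
Lemma bilNl x y : br (- x) y = - br x y. Proof. exact: (linN (bil_linl y)). Qed.
Lemma bilNr x y : br x (- y) = - br x y. Proof. exact: (linN (bil_linr x)). Qed.
Lemma bilBl x x' y : br (x - x') y = br x y - br x' y. Proof. exact: (linB (bil_linl y)). Qed.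
Lemma bilBr x y y' : br x (y - y') = br x y - br x y'. Proof. exact: (linB (bil_linr x)). Qed.
End BilinearMap.

Section Subspace.
Variables (A : lmodType K) (W : A -> Prop) (W_sub : is_subspace W).

Lemma subspace0 : W 0. Proof. by case: W_sub. Qed.
Lemma subspace_comb c x y : W x -> W y -> W (c *: x + y).
Proof. by case: W_sub => _; apply. Qed.
Lemma subspaceD x y : W x -> W y -> W (x + y).
Proof. by move=> Wx Wy; have := subspace_comb 1 Wx Wy; rewrite scale1r. Qed.
Lemma subspaceZ c x : W x -> W (c *: x).
Proof. by move=> Wx; have := subspace_comb c Wx subspace0; rewrite addr0. Qed.
Lemma subspaceB x y : W x -> W y -> W (x - y).
Proof. by move=> Wx Wy; rewrite addrC -scaleN1r; apply: subspace_comb. Qed.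
End Subspace.

Lemma sum_ord_delta (A : lmodType K) (n k : nat) (a : A) :
  \sum_(i < n) (if (i : nat) == k then a else 0) = if (k < n)%N then a else 0.
Proof.
case: (ltnP k n) => [lt_kn | le_nk].
  rewrite (bigD1 (Ordinal lt_kn)) //= eqxx big1 ?addr0 // => i ne_ik.
  by rewrite ifN //; apply: contraNneq ne_ik => /eqP e; apply/eqP/val_inj.
rewrite big1 // => i _; rewrite ifN //; apply/negP => /eqP e.
by have := ltn_ord i; rewrite e ltnNge le_nk.
Qed.

Lemma sign_mulK n : sgn n * sgn n = 1 :> K.
Proof. by rewrite -expr2 sqrr_sign. Qed.

End LinearAlgebra.

Section Grading.
Variables (K : fieldType) (L : lmodType K) (G : nat -> L -> Prop).
Hypothesis G_grading : is_neg_grading G.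

Lemma grading_subspace i : is_subspace (G i). Proof. by case: G_grading. Qed.
Lemma grading0 i : G i 0. Proof. exact: (subspace0 (grading_subspace i)). Qed.
Lemma grading_deg0 x : G 0 x -> x = 0. Proof. by case: G_grading => _ + _ _; apply. Qed.

Lemma grading_sum_eq0 n xs : (forall i, G i (xs i)) -> \sum_(i < n) xs i = 0 ->
  forall i, (i < n)%N -> xs i = 0.
Proof. by case: G_grading => _ _ _; apply. Qed.

Definition zext n (xs : nat -> L) i := if (i < n)%N then xs i else 0.

Lemma zext_homog n xs : (forall i, G i (xs i)) -> forall i, G i (zext n xs i).
Proof. by move=> Gxs i; rewrite /zext; case: ifP => _ //; apply: grading0. Qed.

Lemma sum_zext n (xs : nat -> L) N :
  (n <= N)%N -> \sum_(i < n) xs i = \sum_(i < N) zext n xs i.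
Proof.
move=> le_nN; rewrite -(subnKC le_nN) big_split_ord /= [X in _ = _ + X]big1 ?addr0.
  by apply: eq_bigr => i _; rewrite /zext /= ltn_ord.
by move=> i _; rewrite /zext /= ltnNge leq_addr.
Qed.

Lemma grading_decomp_unique n xs m ys :
  (forall i, G i (xs i)) -> (forall i, G i (ys i)) ->
  \sum_(i < n) xs i = \sum_(i < m) ys i -> forall i, zext n xs i = zext m ys i.
Proof.
move=> Gxs Gys exy i; set N := maxn n m.
have Gdiff k : G k (zext n xs k - zext m ys k).
  by apply: subspaceB; [exact: grading_subspace | exact: zext_homog | exact: zext_homog].
have sum_diff : \sum_(k < N) (zext n xs k - zext m ys k) = 0.
  by rewrite sumrB -!sum_zext ?leq_maxl ?leq_maxr // exy subrr.
case: (ltnP i N) => [lt_iN | le_Ni].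
  by apply/eqP; rewrite -subr_eq0; apply/eqP; exact: (grading_sum_eq0 Gdiff sum_diff).
by rewrite /zext !ifN // -leqNgt (leq_trans _ le_Ni) ?leq_maxl ?leq_maxr.
Qed.

Lemma grading_decomp x :
  {n : nat & {xs : nat -> L | (forall i, G i (xs i)) /\ x = \sum_(i < n) xs i}}.
Proof.
have /constructive_indefinite_description [n] : exists n xs,
    (forall i, G i (xs i)) /\ x = \sum_(i < n) xs i by case: G_grading => _ _ + _; apply.
by move/constructive_indefinite_description => [xs Pxs]; exists n, xs.
Qed.

Definition dlen x := projT1 (grading_decomp x).
Definition dseq x := sval (projT2 (grading_decomp x)).
Lemma dseqP x : (forall i, G i (dseq x i)) /\ x = \sum_(i < dlen x) dseq x i.
Proof. exact: svalP (projT2 (grading_decomp x)). Qed.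

Definition hcomp i x := zext (dlen x) (dseq x) i.

Lemma hcomp_homog i x : G i (hcomp i x).
Proof. by apply: zext_homog; case: (dseqP x). Qed.

Lemma hcomp_decomp n xs x : (forall i, G i (xs i)) -> x = \sum_(i < n) xs i ->
  forall i, hcomp i x = zext n xs i.
Proof.
move=> Gxs e i; case: (dseqP x) => Gdseq edseq.
by apply: grading_decomp_unique => //; rewrite -edseq.
Qed.

Lemma hcomp_out i x : (dlen x <= i)%N -> hcomp i x = 0.
Proof. by move=> le_ni; rewrite /hcomp /zext ifN // -leqNgt. Qed.

Lemma sum_hcomp x N : (dlen x <= N)%N -> x = \sum_(i < N) hcomp i x.
Proof. by move=> le_nN; case: (dseqP x) => _ e; rewrite {1}e (sum_zext _ le_nN). Qed.

Lemma hcomp_lin i : linear_map (hcomp i).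
Proof.
move=> c x y; set N := maxn (dlen x) (dlen y).
have Gcomb k : G k (c *: hcomp k x + hcomp k y).
  by apply: subspace_comb; [exact: grading_subspace | exact: hcomp_homog | exact: hcomp_homog].
have e : c *: x + y = \sum_(k < N) (c *: hcomp k x + hcomp k y).
  by rewrite big_split /= -scaler_sumr -!sum_hcomp ?leq_maxl ?leq_maxr.
rewrite (hcomp_decomp Gcomb e) /zext; case: ifP => // /negbT; rewrite -leqNgt => le_Ni.
by rewrite !hcomp_out ?scaler0 ?addr0 // (leq_trans _ le_Ni) ?leq_maxl ?leq_maxr.
Qed.

Lemma hcomp_of_homog k x : G k x -> forall i, hcomp i x = if i == k then x else 0.
Proof.
move=> Gx i.
have Gdelta j : G j (if j == k then x else 0) by case: eqP => [->|_] //; apply: grading0.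
have e : x = \sum_(j < k.+1) (if (j : nat) == k then x else 0) by rewrite sum_ord_delta ltnSn.
by rewrite (hcomp_decomp Gdelta e) /zext; case: ifP => //; case: eqP => // ->; rewrite ltnSn.
Qed.

Definition parity x := \sum_(i < dlen x) sgn i *: hcomp i x.

Lemma parityE x N : (dlen x <= N)%N -> parity x = \sum_(i < N) sgn i *: hcomp i x.
Proof.
move=> le_nN; rewrite /parity -(subnKC le_nN) big_split_ord /= [X in _ = _ + X]big1 ?addr0 //.
by move=> i _; rewrite hcomp_out ?scaler0 // leq_addr.
Qed.

Lemma parity_lin : linear_map parity.
Proof.
move=> c x y; set N := maxn (dlen (c *: x + y)) (maxn (dlen x) (dlen y)).
rewrite (@parityE (c *: x + y) N) ?leq_maxl // (@parityE x N); last first.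
  by rewrite (leq_trans _ (leq_maxr _ _)) ?leq_maxl.
rewrite (@parityE y N); last by rewrite (leq_trans _ (leq_maxr _ _)) ?leq_maxr.
rewrite scaler_sumr -big_split /=.
by apply: eq_bigr => i _; rewrite hcomp_lin scalerDr !scalerA mulrC.
Qed.

Lemma parity_homog k x : G k x -> parity x = sgn k *: x.
Proof.
move=> Gx; rewrite (@parityE x (maxn (dlen x) k.+1)) ?leq_maxl //.
rewrite (eq_bigr (fun i : 'I_ _ => if (i : nat) == k then sgn k *: x else 0)).
  by rewrite sum_ord_delta (leq_trans _ (leq_maxr _ _)).
by move=> i _; rewrite (hcomp_of_homog Gx); case: eqP => [->|_]; rewrite ?scaler0.
Qed.

End Grading.

Lemma surj_lift_homog (K : fieldType) (F T : lmodType K)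
    (GF : nat -> F -> Prop) (GT : nat -> T -> Prop) (pi : F -> T) :
  is_neg_grading GF -> is_neg_grading GT ->
  linear_map pi -> (forall i x, GF i x -> GT i (pi x)) -> (forall t, exists x, pi x = t) ->
  forall i t, GT i t -> exists x, GF i x /\ pi x = t.
Proof.
move=> GFg GTg pi_lin pi_deg pi_surj i t; have [x0 <- GTx0] := pi_surj t.
exists (hcomp GFg i x0); split; first exact: hcomp_homog.
have e : pi x0 = \sum_(k < dlen GFg x0) pi (hcomp GFg k x0).
  by rewrite -lin_sum // -sum_hcomp.
have := hcomp_decomp GTg (fun k => pi_deg _ _ (hcomp_homog GFg k x0)) e i.
rewrite (hcomp_of_homog GTg GTx0) eqxx /zext => ->.
by case: ifP => // /negbT; rewrite -leqNgt => le_ni; rewrite hcomp_out // lin0.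
Qed.

Section GradedLie.
Variables (K : fieldType) (L : lmodType K) (br : L -> L -> L) (G : nat -> L -> Prop).
Hypothesis L_Lie : is_neg_graded_Lie br G.

Lemma gLie_grading : is_neg_grading G. Proof. by case: L_Lie. Qed.
Lemma gLie_bil : bilinear_map br. Proof. by case: L_Lie. Qed.
Lemma gLie_deg i j x y : G i x -> G j y -> G (i + j)%N (br x y).
Proof. by case: L_Lie => _ _ + _ _; apply. Qed.
Lemma gLie_anti i j x y : G i x -> G j y -> br x y = - (sgn (i * j) *: br y x).
Proof. by case: L_Lie => _ _ _ + _; apply. Qed.
Lemma gLie_jacobi i j x y z : G i x -> G j y ->
  br x (br y z) = br (br x y) z + sgn (i * j) *: br y (br x z).
Proof. by case: L_Lie => _ _ _ _; apply. Qed.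

End GradedLie.

Section TwistedExtension.
Variables (K : fieldType) (F T V : lmodType K).
Variables (brF : F -> F -> F) (GF : nat -> F -> Prop) (brT : T -> T -> T) (GT : nat -> T -> Prop).
Hypotheses (F_Lie : is_neg_graded_Lie brF GF) (T_Lie : is_neg_graded_Lie brT GT).
Variable pi : F -> T.
Hypotheses (pi_lin : linear_map pi) (pi_br : forall x y, pi (brF x y) = brT (pi x) (pi y))
  (pi_deg : forall i x, GF i x -> GT i (pi x)).
Variable rho : V -> T -> T.
Hypotheses (rho_linr : forall p, linear_map (rho p)) (rho_linl : forall X, linear_map (rho^~ X))
  (rho_der : forall p X Y, rho p (brT X Y) = brT (rho p X) Y + brT X (rho p Y))
  (rho_deg : forall p i X, GT i X -> GT i (rho p X)).
Variable S : F -> F.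
Hypotheses (S_lin : linear_map S) (S_homog : forall i a, GF i a -> S a = sgn i *: a).

(* [M = F (+) T[1] (+) V], with [T_{-i}] placed in degree [-(i+1)] and [V] in
   degree [-1] only.  The [T]-component of a Lie morphism [F -> M] lifting the
   identity of [F] is a degree [+1] map [D] obeying the Leibniz rule along [pi],
   twisted by [rho] on brackets with the generators (the [V]-component). *)
Local Notation M := (F * T * V)%type.
Definition GM i (X : M) : Prop := [/\ GF i X.1.1, GT i.-1 X.1.2 & i <> 1%N -> X.2 = 0].
Definition brM (X Y : M) : M :=
  ((brF X.1.1 Y.1.1,
    brT X.1.2 (pi Y.1.1) + brT (pi (S X.1.1)) Y.1.2 + rho X.2 (pi Y.1.1) - rho Y.2 (pi (S X.1.1))),
   0).

Lemma M_eq (X Y : M) : X.1.1 = Y.1.1 -> X.1.2 = Y.1.2 -> X.2 = Y.2 -> X = Y.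
Proof. by case: X => [[? ?] ?]; case: Y => [[? ?] ?] /= -> -> ->. Qed.

Lemma sumM_F I r (P : pred I) (E : I -> M) :
  (\sum_(i <- r | P i) E i).1.1 = \sum_(i <- r | P i) (E i).1.1.
Proof. exact: (big_morph (fun X : M => X.1.1) (fun _ _ => erefl) erefl). Qed.
Lemma sumM_T I r (P : pred I) (E : I -> M) :
  (\sum_(i <- r | P i) E i).1.2 = \sum_(i <- r | P i) (E i).1.2.
Proof. exact: (big_morph (fun X : M => X.1.2) (fun _ _ => erefl) erefl). Qed.
Lemma sumM_V I r (P : pred I) (E : I -> M) :
  (\sum_(i <- r | P i) E i).2 = \sum_(i <- r | P i) (E i).2.
Proof. exact: (big_morph (fun X : M => X.2) (fun _ _ => erefl) erefl). Qed.

Let GF_grading := gLie_grading F_Lie.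
Let GT_grading := gLie_grading T_Lie.
Let brF_bil := gLie_bil F_Lie.
Let brT_bil := gLie_bil T_Lie.

Lemma rho0l X : rho 0 X = 0. Proof. exact: (lin0 (rho_linl X)). Qed.

Lemma GM_subspace i : is_subspace (GM i).
Proof.
split; first by split=> //=; apply: grading0.
move=> c X Y [GX1 GX2 GX3] [GY1 GY2 GY3]; split=> /=.
- by apply: subspace_comb => //; apply: grading_subspace.
- by apply: subspace_comb => //; apply: grading_subspace.
- by move=> ne1; rewrite GX3 // GY3 // scaler0 addr0.
Qed.

Lemma GM_decomp X : exists n Xs, (forall i, GM i (Xs i)) /\ X = \sum_(i < n) Xs i.
Proof.
set a := X.1.1; set b := X.1.2.
exists (maxn (dlen GF_grading a) (maxn (dlen GT_grading b) 1)).+1.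
exists (fun k => ((hcomp GF_grading k a, if k == 0%N then 0 else hcomp GT_grading k.-1 b),
                 if k == 1%N then X.2 else 0)).
split.
  move=> k; split=> /=; first exact: hcomp_homog.
    by case: eqP => _; [apply: grading0 | apply: hcomp_homog].
  by move=> ne1; rewrite ifN //; apply/eqP.
apply: M_eq.
- by rewrite sumM_F /= -sum_hcomp // (leq_trans _ (leqnSn _)) ?leq_maxl.
- rewrite sumM_T big_ord_recl /= add0r -sum_hcomp //.
  by rewrite (leq_trans _ (leq_maxr _ _)) ?leq_maxl.
- rewrite sumM_V /= sum_ord_delta ifT //.
  by rewrite ltnS (leq_trans _ (leq_maxr _ _)) ?leq_maxr.
Qed.

Lemma GM_sum_eq0 n Xs : (forall i, GM i (Xs i)) -> \sum_(i < n) Xs i = 0 ->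
  forall i, (i < n)%N -> Xs i = 0.
Proof.
move=> GXs sum0 i lt_in; apply: M_eq => /=.
- have GXs1 k : GF k (Xs k).1.1 by case: (GXs k).
  by apply: (grading_sum_eq0 GF_grading GXs1 _ lt_in); rewrite -sumM_F sum0.
- have Xs02 : (Xs 0%N).1.2 = 0 by case: (GXs 0%N) => _ G02 _; exact: (grading_deg0 GT_grading G02).
  case: n lt_in sum0 => // n lt_in sum0; case: i lt_in => [|i] lt_in; first exact: Xs02.
  have GXs2 k : GT k (Xs k.+1).1.2 by case: (GXs k.+1).
  apply: (grading_sum_eq0 GT_grading GXs2 _ (ltnSE lt_in)).
  by have := f_equal (fun X : M => X.1.2) sum0; rewrite /= sumM_T big_ord_recl Xs02 add0r.
- case: (eqVneq i 1%N) => [ei | ne1]; last by case: (GXs i) => _ _; apply; apply/eqP.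
  rewrite ei in lt_in *; have := f_equal (fun X : M => X.2) sum0; rewrite /= sumM_V.
  rewrite (eq_bigr (fun j : 'I_n => if (j : nat) == 1%N then (Xs 1%N).2 else 0)).
    by rewrite sum_ord_delta lt_in.
  by move=> j _; case: eqP => [->|ne1] //; case: (GXs j) => _ _; apply.
Qed.

Lemma GM_grading : is_neg_grading GM.
Proof.
split; [exact: GM_subspace | | exact: GM_decomp | exact: GM_sum_eq0].
move=> X [GX1 GX2 GX3]; apply: M_eq => /=; last exact: GX3.
  exact: (grading_deg0 GF_grading).
exact: (grading_deg0 GT_grading).
Qed.

Lemma brM_bil : bilinear_map brM.
Proof.
split.
- move=> c X X' Y; apply: M_eq => /=.
  + by rewrite (bilDl brF_bil) (bilZl brF_bil).
  + rewrite S_lin pi_lin (bilDl brT_bil) (bilZl brT_bil) (bilDl brT_bil) (bilZl brT_bil).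
    rewrite rho_linl (rho_linr Y.2) !scalerDr scalerN !opprD !addrA.
    by rewrite (ACl (1*3*5*7*2*4*6*8))%AC.
  + by rewrite scaler0 addr0.
- move=> c X Y Y'; apply: M_eq => /=.
  + by rewrite (bilDr brF_bil) (bilZr brF_bil).
  + rewrite pi_lin (bilDr brT_bil) (bilZr brT_bil) (bilDr brT_bil) (bilZr brT_bil).
    rewrite (rho_linr X.2) rho_linl !scalerDr scalerN !opprD !addrA.
    by rewrite (ACl (1*3*5*7*2*4*6*8))%AC.
  + by rewrite scaler0 addr0.
Qed.

Lemma brM0l Y : brM 0 Y = 0. Proof. exact: (bil0l brM_bil). Qed.
Lemma brM0r X : brM X 0 = 0. Proof. exact: (bil0r brM_bil). Qed.
Lemma GM_deg0 X : GM 0 X -> X = 0. Proof. exact: (grading_deg0 GM_grading). Qed.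

Lemma brM_deg i j X Y : GM i X -> GM j Y -> GM (i + j) (brM X Y).
Proof.
case: i => [|i] GX; first by rewrite (GM_deg0 GX) brM0l; split => //=; apply: grading0.
case: j => [|j] GY; first by rewrite (GM_deg0 GY) brM0r; split => //=; apply: grading0.
case: X GX => [[a b] p] [/= Ga Gb Gp]; case: Y GY => [[c e] q] [/= Gc Ge Gq].
have GT_sub k := grading_subspace GT_grading k.
split => //=; first exact: (gLie_deg F_Lie Ga Gc).
apply: subspaceB => //; first (apply: subspaceD => //; first apply: subspaceD => //).
- exact: (gLie_deg T_Lie Gb (pi_deg Gc)).
- rewrite (S_homog Ga) (linZ pi_lin) (bilZl brT_bil) -addSnnS; apply: subspaceZ => //.
  exact: (gLie_deg T_Lie (pi_deg Ga) Ge).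
- case: i Gp {Ga Gb} => [|i] Gp; first by apply: rho_deg; apply: pi_deg.
  by rewrite Gp // rho0l; apply: subspace0.
- case: j Gq {Gc Ge} => [|j] Gq; last by rewrite Gq // rho0l; apply: subspace0.
  rewrite addn1; apply: rho_deg; rewrite (S_homog Ga) (linZ pi_lin).
  by apply: subspaceZ => //; apply: pi_deg.
Qed.

Lemma signM_Sl i j : sgn (i.+1 * j) = sgn j * sgn (i * j) :> K.
Proof. by rewrite mulSn exprD. Qed.
Lemma signM_Sr i j : sgn (i * j.+1) = sgn i * sgn (i * j) :> K.
Proof. by rewrite mulnS exprD. Qed.

Lemma brM_anti i j X Y : GM i X -> GM j Y -> brM X Y = - (sgn (i * j) *: brM Y X).
Proof.
case: i => [|i] GX; first by rewrite (GM_deg0 GX) brM0l brM0r scaler0 oppr0.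
case: j => [|j] GY; first by rewrite (GM_deg0 GY) brM0l brM0r scaler0 oppr0.
case: X GX => [[a b] p] [/= Ga Gb Gp]; case: Y GY => [[c e] q] [/= Gc Ge Gq].
apply: M_eq => /=; last by rewrite scaler0 oppr0.
  exact: (gLie_anti F_Lie Ga Gc).
have antisym4 (s : K) (a1 a2 a3 a4 b1 b2 b3 b4 : T) :
    a1 = - (s *: b2) -> a2 = - (s *: b1) -> a3 = s *: b4 -> a4 = s *: b3 ->
    a1 + a2 + a3 - a4 = - (s *: (b1 + b2 + b3 - b4)).
  move=> -> -> -> ->; rewrite !scalerDr scalerN !opprD opprK.
  by rewrite (ACl (2*1*4*3))%AC.
rewrite (S_homog Ga) (S_homog Gc) !(linZ pi_lin); apply: antisym4.
- rewrite (gLie_anti T_Lie Gb (pi_deg Gc)) (bilZl brT_bil) scalerA; congr (- (_ *: _)).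
  by rewrite signM_Sl mulrC mulrA sign_mulK mul1r.
- by rewrite (bilZl brT_bil) (gLie_anti T_Lie (pi_deg Ga) Ge) scalerN scalerA signM_Sr.
- rewrite (linZ (rho_linr p)) scalerA.
  case: i Gp {Ga Gb} => [|i] Gp; last by rewrite Gp // !rho0l scaler0.
  by rewrite mul1n sign_mulK scale1r.
- rewrite (linZ (rho_linr q)).
  case: j Gq {Gc Ge} => [|j] Gq; last by rewrite Gq // !rho0l !scaler0.
  by rewrite muln1.
Qed.

Lemma brM_jacobi i j X Y Z : GM i X -> GM j Y ->
  brM X (brM Y Z) = brM (brM X Y) Z + sgn (i * j) *: brM Y (brM X Z).
Proof.
case: i => [|i] GX; first by rewrite (GM_deg0 GX) !brM0l brM0r scaler0 addr0.
case: j => [|j] GY; first by rewrite (GM_deg0 GY) !brM0l brM0r brM0l scaler0 addr0.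
case: X GX => [[a b] p] [/= Ga Gb Gp]; case: Y GY => [[c e] q] [/= Gc Ge Gq].
case: Z => [[f h] r].
apply: M_eq => /=; last by rewrite scaler0 addr0.
  exact: (gLie_jacobi F_Lie f Ga Gc).
rewrite (S_homog Ga) (S_homog Gc) (S_homog (gLie_deg F_Lie Ga Gc)) !(linZ pi_lin) !pi_br.
(* E1-E3 are instances of the Jacobi identity of [T], E6 of its antisymmetry;
   E4 and E5 use that [p] (resp. [q]) vanishes unless [X] (resp. [Y]) has degree 1. *)
rewrite !rho0l subr0 !(bilDl brT_bil, bilDr brT_bil, bilZl brT_bil, bilZr brT_bil,
  bilNl brT_bil, bilNr brT_bil, linD (rho_linr _), linZ (rho_linr _), linN (rho_linr _),
  rho_der).
have GA := pi_deg Ga; have GC := pi_deg Gc.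
set A := pi a in GA *; set C := pi c in GC *; set Fz := pi f.
have E1 : brT b (brT C Fz) =
    brT (brT b C) Fz + sgn (i.+1 * j.+1) *: (sgn j.+1 *: brT C (brT b Fz)).
  by rewrite (gLie_jacobi T_Lie _ Gb GC) scalerA signM_Sl mulrC mulrA sign_mulK mul1r.
have E2 : sgn i.+1 *: brT A (brT e Fz) =
    sgn i.+1 *: brT (brT A e) Fz + sgn (i.+1 * j.+1) *: brT e (brT A Fz).
  by rewrite (gLie_jacobi T_Lie _ GA Ge) scalerDr scalerA -signM_Sr.
have E3 : sgn i.+1 *: (sgn j.+1 *: brT A (brT C h)) =
    sgn (i.+1 + j.+1) *: brT (brT A C) h +
    sgn (i.+1 * j.+1) *: (sgn j.+1 *: (sgn i.+1 *: brT C (brT A h))).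
  rewrite (gLie_jacobi T_Lie _ GA GC) !scalerDr !scalerA exprD; congr (_ + _ *: _).
  by ring.
have E4 : brT (rho p C) Fz + brT C (rho p Fz) =
    brT (rho p C) Fz + sgn (i.+1 * j.+1) *: (sgn j.+1 *: brT C (rho p Fz)).
  case: (eqVneq i 0%N) => [-> | ne0]; first by rewrite scalerA mul1n sign_mulK scale1r.
  have -> : p = 0 by apply: Gp; case: (i) ne0.
  by rewrite !rho0l (bil0l brT_bil) (bil0r brT_bil) !scaler0.
have E5 : sgn i.+1 *: brT A (rho q Fz) = - (sgn i.+1 *: brT (rho q A) Fz) +
    sgn (i.+1 * j.+1) *: (brT (rho q A) Fz + brT A (rho q Fz)).
  case: (eqVneq j 0%N) => [-> | ne0]; first by rewrite muln1 scalerDr addKr.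
  have -> : q = 0 by apply: Gq; case: (j) ne0.
  by rewrite !rho0l (bil0l brT_bil) (bil0r brT_bil) !(scaler0, addr0, add0r, oppr0).
have E6 : sgn i.+1 *: - (sgn j.+1 *: brT A (rho r C)) =
    - (sgn (i.+1 + j.+1) *: (brT (rho r A) C + brT A (rho r C))) +
    sgn (i.+1 * j.+1) *: (sgn j.+1 *: - (sgn i.+1 *: brT C (rho r A))).
  rewrite (gLie_anti T_Lie GC (rho_deg r GA)) (mulnC j.+1) !scalerN opprK !scalerA.
  rewrite !scalerDr opprD exprD.
  have -> : sgn (i.+1 * j.+1) * sgn j.+1 * sgn i.+1 * sgn (i.+1 * j.+1) = sgn i.+1 * sgn j.+1 :> K.
    by rewrite mulrC !mulrA sign_mulK mul1r mulrC.
  by rewrite addrAC addNr add0r.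
rewrite E1 E2 E3 E4 E5 E6 subr0 addr0 !scalerDr !opprD !addrA.
by rewrite (ACl (1*3*13*7*5*10*11*4*2*6*14*12*8*9))%AC.
Qed.

Lemma brM_neg_graded_Lie : is_neg_graded_Lie brM GM.
Proof.
by split; [exact: GM_grading | exact: brM_bil | exact: brM_deg | exact: brM_anti
  | exact: brM_jacobi].
Qed.

End TwistedExtension.

Inductive Generated (K : fieldType) (V F : lmodType K) (brF : F -> F -> F) (iota : V -> F)
  : nat -> F -> Prop :=
| gen_iota v : Generated brF iota 1 (iota v)
| gen_br i j x y : Generated brF iota i x -> Generated brF iota j y ->
    Generated brF iota (i + j) (brF x y)
| gen0 i : Generated brF iota i 0
| gen_comb i (c : K) x y : Generated brF iota i x -> Generated brF iota i y ->
    Generated brF iota i (c *: x + y).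

Section FreeLie.
Variables (K : fieldType) (V F : lmodType K) (brF : F -> F -> F) (GF : nat -> F -> Prop).
Variable iota : V -> F.
Hypothesis F_free : is_free_graded_Lie brF GF iota.

Lemma free_Lie : is_neg_graded_Lie brF GF. Proof. by case: F_free. Qed.
Lemma free_iota_lin : linear_map iota. Proof. by case: F_free. Qed.
Lemma free_iota_deg v : GF 1 (iota v). Proof. by case: F_free. Qed.

Let brF_bil := gLie_bil free_Lie.
Let GF_grading := gLie_grading free_Lie.
Local Notation Gen := (Generated brF iota).

Lemma free_endo_id (psi : F -> F) : graded_Lie_morphism brF GF brF GF psi ->
  (forall v, psi (iota v) = iota v) -> forall x, psi x = x.
Proof.
move=> psi_mor psi_iota x; case: F_free => F_Lie iota_lin iota_deg univ.
have [phi [_ _ phi_uniq]] := univ F brF GF F_Lie iota iota_lin iota_deg.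
by rewrite (phi_uniq psi) // -(phi_uniq id) //; split.
Qed.

Lemma generated_sum i I r (P : pred I) (E : I -> F) :
  (forall k, P k -> Gen i (E k)) -> Gen i (\sum_(k <- r | P k) E k).
Proof.
move=> GenE; apply: big_ind => //; first exact: gen0.
by move=> x y Genx Geny; rewrite -[x]scale1r; apply: gen_comb.
Qed.

Lemma generated_homog i x : Gen i x -> GF i x.
Proof.
elim=> {i x} [v | i j x y _ GFx _ GFy | i | i c x y _ GFx _ GFy].
- exact: free_iota_deg.
- exact: (gLie_deg free_Lie GFx GFy).
- exact: (grading0 GF_grading).
- by apply: subspace_comb => //; apply: (grading_subspace GF_grading).
Qed.

Lemma generated_low_deg n x : Gen n x ->
  (n = 0%N -> x = 0) /\ (n = 1%N -> exists u, x = iota u).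
Proof.
have iota0 : 0 = iota 0 by rewrite (lin0 free_iota_lin).
elim=> {n x} [v | i j x y _ [x0 x1] _ [y0 y1] | i | i c x y _ [x0 x1] _ [y0 y1]].
- by split=> // _; exists v.
- split.
    by move/eqP; rewrite addn_eq0 => /andP [/eqP /x0 -> _]; rewrite (bil0l brF_bil).
  case: i x0 x1 => [|i] x0 x1.
    by rewrite add0n (x0 erefl) (bil0l brF_bil) => _; exists 0.
  case: j y0 y1 => [|j] y0 y1; last by rewrite addSn addnS.
  by rewrite (y0 erefl) (bil0r brF_bil) => _; exists 0.
- by split=> // _; exists 0.
- split; first by move=> e; rewrite (x0 e) (y0 e) scaler0 addr0.
  move=> e; have [u ->] := x1 e; have [w ->] := y1 e.
  by exists (c *: u + w); rewrite free_iota_lin.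
Qed.

Lemma generated_deg0 x : Gen 0 x -> x = 0.
Proof. by case/generated_low_deg => + _; apply. Qed.
Lemma generated_deg1 x : Gen 1 x -> exists u, x = iota u.
Proof. by case/generated_low_deg => _; apply. Qed.

Definition gen_sum (x : F) :=
  exists n xs, (forall i, Gen i (xs i)) /\ x = \sum_(i < n) xs i.

Lemma gen_sum0 : gen_sum 0.
Proof. by exists 0%N, (fun _ => 0); rewrite big_ord0; split=> // i; apply: gen0. Qed.

Lemma gen_sum_comb (c : K) x y : gen_sum x -> gen_sum y -> gen_sum (c *: x + y).
Proof.
move=> [n [xs [Genxs ->]]] [m [ys [Genys ->]]].
exists (maxn n m), (fun k => c *: zext n xs k + zext m ys k); split.
  by move=> k; apply: gen_comb; rewrite /zext; case: ifP => _ //; apply: gen0.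
by rewrite big_split /= -scaler_sumr -!sum_zext ?leq_maxl ?leq_maxr.
Qed.

Lemma gen_sum_homog i x : Gen i x -> gen_sum x.
Proof.
move=> Genx; exists i.+1, (fun k => if k == i then x else 0); split.
  by move=> k; case: eqP => [->|_] //; apply: gen0.
by rewrite sum_ord_delta ltnSn.
Qed.

Lemma gen_sum_br x y : gen_sum x -> gen_sum y -> gen_sum (brF x y).
Proof.
move=> [n [xs [Genxs ->]]] [m [ys [Genys ->]]].
exists (n + m)%N, (fun k => \sum_(i < n) \sum_(j < m)
  (if k == (i + j)%N then brF (xs i) (ys j) else 0)); split.
  move=> k; apply: generated_sum => i _; apply: generated_sum => j _.
  by case: eqP => [->|_]; [apply: gen_br | apply: gen0].
rewrite (lin_sum (bil_linl brF_bil _)).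
under eq_bigr => i _ do rewrite (lin_sum (bil_linr brF_bil _)).
rewrite [RHS]exchange_big /=; apply: eq_bigr => i _.
rewrite [RHS]exchange_big /=; apply: eq_bigr => j _.
by rewrite sum_ord_delta ifT // -addSn leq_add // ltnW.
Qed.

Definition gen_sumb : {pred F} :=
  fun x => if excluded_middle_informative (gen_sum x) then true else false.

Lemma gen_sumP x : reflect (gen_sum x) (gen_sumb x).
Proof. by rewrite /gen_sumb; case: excluded_middle_informative => h; constructor. Qed.

Lemma gen_sumb_submod_closed : GRing.submod_closed gen_sumb.
Proof.
split; first exact/gen_sumP/gen_sum0.
by move=> c u v /gen_sumP Gu /gen_sumP Gv; apply/gen_sumP/gen_sum_comb.
Qed.

HB.instance Definition _ :=
  GRing.isSubmodClosed.Build K F gen_sumb gen_sumb_submod_closed.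
Record GenSub := MkGenSub { gval : F; gvalP : gval \in gen_sumb }.
HB.instance Definition _ := [isSub for gval].
HB.instance Definition _ := [Choice of GenSub by <:].
HB.instance Definition _ := [SubChoice_isSubLmodule of GenSub by <:].

Lemma gval_lin : linear_map gval. Proof. by []. Qed.
Lemma gval_inj : injective gval. Proof. exact: val_inj. Qed.

Lemma gen_sumb_br (x y : GenSub) : brF (gval x) (gval y) \in gen_sumb.
Proof. by apply/gen_sumP/gen_sum_br; apply/gen_sumP; [exact: gvalP x | exact: gvalP y]. Qed.

Lemma generated_in i x : Gen i x -> x \in gen_sumb.
Proof. by move=> Genx; apply/gen_sumP; exact: gen_sum_homog Genx. Qed.

Definition brSub (x y : GenSub) : GenSub := MkGenSub (gen_sumb_br x y).
Definition GSub i (x : GenSub) := Gen i (gval x).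

Lemma GenSub_neg_graded_Lie : is_neg_graded_Lie brSub GSub.
Proof.
split.
- split.
  + move=> i; split; first by rewrite /GSub (lin0 gval_lin); apply: gen0.
    by move=> c x y Gx Gy; rewrite /GSub gval_lin; apply: gen_comb.
  + by move=> x /generated_deg0 x0; apply: gval_inj; rewrite x0 (lin0 gval_lin).
  + move=> x; have /gen_sumP [n [xs [Genxs exs]]] := gvalP x.
    exists n, (fun i => MkGenSub (generated_in (Genxs i))); split => //.
    by apply: gval_inj; rewrite (lin_sum gval_lin) exs.
  + move=> n xs Gxs sum0 i lt_in; apply: gval_inj; rewrite (lin0 gval_lin).
    apply: (grading_sum_eq0 GF_grading (xs := fun k => gval (xs k))) lt_in.
      by move=> k; apply: generated_homog; apply: Gxs.
    by rewrite -(lin_sum gval_lin) sum0 (lin0 gval_lin).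
- split=> c x x' y; apply: gval_inj; rewrite gval_lin /=.
    exact: (bil_linl brF_bil).
  exact: (bil_linr brF_bil).
- by move=> i j x y Gx Gy; apply: gen_br.
- move=> i j x y Gx Gy; apply: gval_inj; rewrite (linN gval_lin) (linZ gval_lin) /=.
  exact: (gLie_anti free_Lie (generated_homog Gx) (generated_homog Gy)).
- move=> i j x y z Gx Gy; apply: gval_inj; rewrite (linD gval_lin) (linZ gval_lin) /=.
  exact: (gLie_jacobi free_Lie _ (generated_homog Gx) (generated_homog Gy)).
Qed.

(* The subalgebra generated by [iota V] receives a Lie morphism from [F] over the
   identity of [V]; composed with the inclusion it is the identity of [F]. *)
Lemma homog_generated i x : GF i x -> Gen i x.
Proof.
case: F_free => _ iota_lin _ univ.
pose f v : GenSub := MkGenSub (generated_in (gen_iota brF iota v)).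
have f_lin : linear_map f by move=> c v w; apply: gval_inj; rewrite /= iota_lin.
have [psi [[psi_lin psi_br psi_deg] psi_iota _]] :=
  univ _ brSub GSub GenSub_neg_graded_Lie f f_lin (fun v => gen_iota brF iota v).
have gval_psi y : gval (psi y) = y.
  apply: (free_endo_id (psi := gval \o psi)); last by move=> v /=; rewrite psi_iota.
  split; first exact: (lin_comp psi_lin gval_lin).
    by move=> y1 y2 /=; rewrite psi_br.
  by move=> k y' GFy'; apply: generated_homog; apply: psi_deg.
by move=> GFx; rewrite -(gval_psi x); apply: psi_deg.
Qed.

Lemma free_ind (P : F -> Prop) : P 0 -> (forall c x y, P x -> P y -> P (c *: x + y)) ->
  (forall v, P (iota v)) ->
  (forall i j x y, Gen i x -> Gen j y -> P x -> P y -> P (brF x y)) -> forall x, P x.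
Proof.
move=> P0 Pcomb Piota Pbr.
have Pgen n x : Gen n x -> P x.
  elim=> {n x} [v | i j x y Genx Px Geny Py | i | i c x y _ Px _ Py].
  - exact: Piota.
  - exact: (Pbr i j x y Genx Geny Px Py).
  - exact: P0.
  - exact: Pcomb.
move=> x; rewrite (sum_hcomp (leqnn (dlen GF_grading x))).
apply: big_ind => //; first by move=> a b Pa Pb; rewrite -[a]scale1r; apply: Pcomb.
by move=> i _; apply: (Pgen i); apply: homog_generated; apply: hcomp_homog.
Qed.

End FreeLie.

Section LieLeibnizTriple.
Variables (K : fieldType) (g V : lmodType K) (brg : g -> g -> g) (act : g -> V -> V).
Variables (circ : V -> V -> V) (Theta : V -> g).
Hypothesis LL : is_Lie_Leibniz_triple brg act circ Theta.

Lemma LL_brg_bil : bilinear_map brg. Proof. by case: LL => [[]]. Qed.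
Lemma LL_act_module : is_Lie_module brg act. Proof. by case: LL => _ []. Qed.
Lemma LL_leibniz x y z : circ x (circ y z) = circ (circ x y) z + circ y (circ x z).
Proof. by case: LL => _ [_ [[_ leib] _]]; apply: leib. Qed.
Lemma LL_circ_bil : bilinear_map circ. Proof. by case: LL => _ [_ [[]]]. Qed.
Lemma LL_Theta_lin : linear_map Theta. Proof. by case: LL => _ [_ [_ []]]. Qed.
Lemma LL_circE x y : circ x y = act (Theta x) y. Proof. by case: LL => _ [_ [_ [_ []]]]. Qed.
Lemma LL_Theta_circ x y : Theta (circ x y) = brg (Theta x) (Theta y).
Proof. by case: LL => _ [_ [_ [_ [_ ThC]]]]. Qed.

Lemma LL_brg_anti a b : brg a b = - brg b a.
Proof.
have brg_alt c : brg c c = 0 by case: LL => [[_ []]].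
have := brg_alt (a + b); rewrite (bilDl LL_brg_bil) !(bilDr LL_brg_bil) !brg_alt add0r addr0.
by move/eqP; rewrite addr_eq0 => /eqP.
Qed.

Lemma LL_Theta_symm u v : Theta (circ u v + circ v u) = 0.
Proof. by rewrite (linD LL_Theta_lin) !LL_Theta_circ (LL_brg_anti (Theta v)) addrN. Qed.

End LieLeibnizTriple.

Section FreeRepresentation.
Variables (K : fieldType) (g V F : lmodType K) (brg : g -> g -> g) (act : g -> V -> V).
Hypothesis act_module : is_Lie_module brg act.
Variables (brF : F -> F -> F) (GF : nat -> F -> Prop) (iota : V -> F) (rhoF : g -> F -> F).
Hypotheses (F_free : is_free_graded_Lie brF GF iota)
  (rhoF_ext : derivation_extension act brF GF iota rhoF).

Let brF_bil := gLie_bil (free_Lie F_free).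
Let iota_lin := free_iota_lin F_free.

Lemma rhoF_lin a : linear_map (rhoF a). Proof. by case: (rhoF_ext a). Qed.
Lemma rhoF_der a x y : rhoF a (brF x y) = brF (rhoF a x) y + brF x (rhoF a y).
Proof. by case: (rhoF_ext a). Qed.
Lemma rhoF_deg a i x : GF i x -> GF i (rhoF a x).
Proof. by case: (rhoF_ext a) => _ _ + _; apply. Qed.
Lemma rhoF_iota a v : rhoF a (iota v) = iota (act a v). Proof. by case: (rhoF_ext a). Qed.

Lemma rhoF_linl x : linear_map (rhoF^~ x).
Proof.
move=> c a b; move: x; apply: (free_ind F_free).
- by rewrite !(lin0 (rhoF_lin _)) scaler0 addr0.
- move=> c' x y IHx IHy; rewrite !rhoF_lin IHx IHy !scalerDr !scalerA mulrC !addrA.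
  by rewrite (ACl (1*3*2*4))%AC.
- by move=> v; rewrite !rhoF_iota (bil_linl (proj1 act_module)) iota_lin.
- move=> i j x y _ _ IHx IHy; rewrite !rhoF_der IHx IHy (bilDl brF_bil) (bilZl brF_bil).
  by rewrite (bilDr brF_bil) (bilZr brF_bil) scalerDr !addrA (ACl (1*3*2*4))%AC.
Qed.

Lemma rhoF_br a b x : rhoF (brg a b) x = rhoF a (rhoF b x) - rhoF b (rhoF a x).
Proof.
move: x; apply: (free_ind F_free).
- by rewrite !(lin0 (rhoF_lin _)) subr0.
- move=> c x y IHx IHy; rewrite !rhoF_lin IHx IHy scalerBr opprD !addrA.
  by rewrite (ACl (1*3*2*4))%AC.
- by move=> v; rewrite !rhoF_iota (proj2 act_module) (linB iota_lin).
- move=> i j x y _ _ IHx IHy; rewrite !rhoF_der !(linD (rhoF_lin _)) !rhoF_der IHx IHy.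
  rewrite !(bilBl brF_bil) !(bilBr brF_bil) !opprD !addrA.
  by rewrite [RHS](ACl (1*5*4*8*2*7*3*6))%AC /= !addrK.
Qed.

End FreeRepresentation.

Section TowerDifferential.
Variable K : fieldType.
Hypothesis two_neq0 : (2 : K) != 0.
Variables (g V : lmodType K) (brg : g -> g -> g) (act : g -> V -> V).
Variables (circ : V -> V -> V) (Theta : V -> g).
Hypothesis LL : is_Lie_Leibniz_triple brg act circ Theta.
Variables (F : lmodType K) (brF : F -> F -> F) (GF : nat -> F -> Prop) (iota : V -> F).
Hypothesis F_free : is_free_graded_Lie brF GF iota.
Variable rhoF : g -> F -> F.
Hypothesis rhoF_ext : derivation_extension act brF GF iota rhoF.
Variables (T : lmodType K) (brT : T -> T -> T) (GT : nat -> T -> Prop).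
Hypothesis T_Lie : is_neg_graded_Lie brT GT.
Variable pi : F -> T.
Hypothesis pi_quot : is_graded_quotient brF GF brT GT pi (Kbullet circ brF GF iota rhoF).
Variable rhoT : g -> T -> T.
Hypothesis pi_rho : forall a x, pi (rhoF a x) = rhoT a (pi x).

Local Notation Gen := (Generated brF iota).
Local Notation Kd := (Kdeg circ brF GF iota rhoF).
Local Notation tau v := (pi (iota v)).
Let F_Lie := free_Lie F_free.
Let brF_bil := gLie_bil F_Lie.
Let GF_grading := gLie_grading F_Lie.
Let brT_bil := gLie_bil T_Lie.
Let GT_grading := gLie_grading T_Lie.
Let iota_lin := free_iota_lin F_free.
Let Theta_lin := LL_Theta_lin LL.
Let act_bil := proj1 (LL_act_module LL).

Lemma pi_lin : linear_map pi. Proof. by case: pi_quot => [[]]. Qed.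
Lemma pi_br x y : pi (brF x y) = brT (pi x) (pi y). Proof. by case: pi_quot => [[]]. Qed.
Lemma pi_deg i x : GF i x -> GT i (pi x).
Proof. by case: pi_quot => [[_ _ deg] _ _]; apply: deg. Qed.
Lemma pi_surj t : exists x, pi x = t. Proof. by case: pi_quot. Qed.
Lemma pi_eq0 x : pi x = 0 <-> Kbullet circ brF GF iota rhoF x. Proof. by case: pi_quot. Qed.

Lemma pi_lift_homog i t : GT i t -> exists x, GF i x /\ pi x = t.
Proof. exact: (surj_lift_homog GF_grading GT_grading pi_lin pi_deg pi_surj). Qed.

Lemma tau_deg v : GT 1 (tau v). Proof. exact: pi_deg (free_iota_deg F_free v). Qed.

Lemma rhoT_pi a x : rhoT a (pi x) = pi (rhoF a x). Proof. by rewrite pi_rho. Qed.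

Lemma rhoT_lin a : linear_map (rhoT a).
Proof.
move=> c X Y; have [x <-] := pi_surj X; have [y <-] := pi_surj Y.
by rewrite -pi_lin !rhoT_pi (rhoF_lin rhoF_ext) pi_lin.
Qed.

Lemma rhoT_linl X : linear_map (rhoT^~ X).
Proof.
move=> c a b; have [x <-] := pi_surj X.
by rewrite !rhoT_pi (rhoF_linl (LL_act_module LL) F_free rhoF_ext) pi_lin.
Qed.

Lemma rhoT_der a X Y : rhoT a (brT X Y) = brT (rhoT a X) Y + brT X (rhoT a Y).
Proof.
have [x <-] := pi_surj X; have [y <-] := pi_surj Y.
by rewrite -pi_br !rhoT_pi (rhoF_der rhoF_ext) (linD pi_lin) !pi_br.
Qed.

Lemma rhoT_deg a i X : GT i X -> GT i (rhoT a X).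
Proof.
by move=> /pi_lift_homog [x [GFx <-]]; rewrite rhoT_pi; apply/pi_deg/(rhoF_deg rhoF_ext).
Qed.

Lemma rhoT_br a b X : rhoT (brg a b) X = rhoT a (rhoT b X) - rhoT b (rhoT a X).
Proof.
have [x <-] := pi_surj X.
by rewrite !rhoT_pi (rhoF_br (LL_act_module LL) F_free rhoF_ext) (linB pi_lin).
Qed.

Lemma rhoT_tau w v : rhoT (Theta w) (tau v) = tau (circ w v).
Proof. by rewrite rhoT_pi (rhoF_iota rhoF_ext) (LL_circE LL). Qed.

Lemma rhoT_ker w X : Theta w = 0 -> rhoT (Theta w) X = 0.
Proof. by move=> ->; exact: (lin0 (rhoT_linl X)). Qed.

Definition rhoV (p : V) := rhoT (Theta p).

Lemma rhoV_lin p : linear_map (rhoV p). Proof. exact: rhoT_lin. Qed.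
Lemma rhoV0 X : rhoV 0 X = 0. Proof. exact: (rhoT_ker _ (lin0 Theta_lin)). Qed.

Let M_Lie := brM_neg_graded_Lie F_Lie T_Lie pi_lin pi_br pi_deg
  rhoV_lin (fun X => lin_comp Theta_lin (rhoT_linl X)) (fun p => rhoT_der _)
  (fun p => rhoT_deg _) (parity_lin GF_grading) (parity_homog GF_grading).

Local Notation M := (F * T * V)%type.
Local Notation brM := (brM brF brT pi rhoV (parity GF_grading)).
Local Notation GM := (GM GF GT).

Definition genM (v : V) : M := ((iota v, 0), v).

Lemma genM_lin : linear_map genM.
Proof. by move=> c v w; apply: M_eq => /=; rewrite ?iota_lin ?scaler0 ?addr0. Qed.

Lemma genM_deg v : GM 1 (genM v).
Proof. by split=> //=; [exact: (free_iota_deg F_free) | exact: (grading0 GT_grading 0)]. Qed.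

Definition liftM_spec (phi : F -> M) :=
  graded_Lie_morphism brF GF brM GM phi /\ forall v, phi (iota v) = genM v.

Lemma liftM_ex : exists phi, liftM_spec phi.
Proof.
case: F_free => _ _ _ univ.
by have [phi [? ? _]] := univ _ _ _ M_Lie genM genM_lin genM_deg; exists phi.
Qed.

Definition liftM := projT1 (constructive_indefinite_description _ liftM_ex).
Lemma liftMP : liftM_spec liftM.
Proof. exact: projT2 (constructive_indefinite_description _ liftM_ex). Qed.

Lemma liftM_lin : linear_map liftM. Proof. by case: liftMP => [[]]. Qed.
Lemma liftM_br x y : liftM (brF x y) = brM (liftM x) (liftM y).
Proof. by case: liftMP => [[]]. Qed.
Lemma liftM_deg i x : GF i x -> GM i (liftM x).
Proof. by case: liftMP => [[_ _ deg] _]; apply: deg. Qed.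
Lemma liftM_iota v : liftM (iota v) = genM v. Proof. by case: liftMP. Qed.

Lemma liftM_F x : (liftM x).1.1 = x.
Proof.
apply: (free_endo_id F_free (psi := fun x => (liftM x).1.1)); last first.
  by move=> v; rewrite liftM_iota.
split=> [c y z | y z | i y GFy]; first by rewrite liftM_lin.
  by rewrite liftM_br.
by case: (liftM_deg GFy).
Qed.

Definition D x := (liftM x).1.2.
Definition Vcomp x := (liftM x).2.

Lemma D_lin : linear_map D. Proof. by move=> c x y; rewrite /D liftM_lin. Qed.
Lemma D_iota v : D (iota v) = 0. Proof. by rewrite /D liftM_iota. Qed.
Lemma Vcomp_iota v : Vcomp (iota v) = v. Proof. by rewrite /Vcomp liftM_iota. Qed.
Lemma D_deg i x : GF i x -> GT i.-1 (D x). Proof. by case/liftM_deg. Qed.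
Lemma Vcomp_deg i x : GF i x -> i <> 1%N -> Vcomp x = 0. Proof. by case/liftM_deg. Qed.
Lemma D_br x y : D (brF x y) = brT (D x) (pi y) + brT (pi (parity GF_grading x)) (D y)
  + rhoV (Vcomp x) (pi y) - rhoV (Vcomp y) (pi (parity GF_grading x)).
Proof. by rewrite /D /Vcomp liftM_br /= !liftM_F. Qed.

Lemma parity_iota u : parity GF_grading (iota u) = - iota u.
Proof. by rewrite (parity_homog GF_grading (free_iota_deg F_free u)) expr1 scaleN1r. Qed.

Lemma D_iota_iota u v : D (brF (iota u) (iota v)) = tau (circ u v + circ v u).
Proof.
rewrite D_br !D_iota (bil0l brT_bil) (bil0r brT_bil) !Vcomp_iota parity_iota (linN pi_lin).
rewrite !add0r /rhoV (linN (rhoT_lin _)) !rhoT_tau opprK.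
by rewrite (linD iota_lin) (linD pi_lin).
Qed.

Lemma D_iota_br u i y : GF i y -> (2 <= i)%N ->
  D (brF (iota u) y) = rhoV u (pi y) - brT (tau u) (D y).
Proof.
move=> GFy le2i; rewrite D_br D_iota (bil0l brT_bil) add0r parity_iota (linN pi_lin).
rewrite (bilNl brT_bil) Vcomp_iota (Vcomp_deg GFy); last by move=> ei; rewrite ei in le2i.
by rewrite rhoV0 subr0 addrC.
Qed.

Lemma D_br_br i j x y : GF i x -> GF j y -> (2 <= i)%N -> (2 <= j)%N ->
  D (brF x y) = brT (D x) (pi y) + sgn i *: brT (pi x) (D y).
Proof.
move=> GFx GFy le2i le2j; rewrite D_br (parity_homog GF_grading GFx) (linZ pi_lin).
rewrite (bilZl brT_bil) (Vcomp_deg GFx); last by move=> ei; rewrite ei in le2i.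
rewrite (Vcomp_deg GFy); last by move=> ej; rewrite ej in le2j.
by rewrite !rhoV0 subr0 addr0.
Qed.

Lemma D_deg2 n x : Gen n x -> n = 2%N -> exists2 w, D x = tau w & Theta w = 0.
Proof.
have zero_witness : D 0 = tau 0 /\ Theta 0 = 0.
  by rewrite (lin0 D_lin) (lin0 iota_lin) (lin0 pi_lin) (lin0 Theta_lin).
elim=> {n x} [v | i j x y Genx _ Geny _ | i | i c x y _ IHx _ IHy] //.
- case: i Genx => [|[|i]] Genx.
  + by rewrite (generated_deg0 F_free Genx) (bil0l brF_bil) => _; exists 0; case: zero_witness.
  + case: j Geny => [|[|j]] Geny // _.
    have [u ->] := generated_deg1 F_free Genx; have [v ->] := generated_deg1 F_free Geny.
    by exists (circ u v + circ v u); rewrite ?D_iota_iota ?(LL_Theta_symm LL).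
  + case: j Geny => [|j] Geny; last by rewrite !addnS.
    by rewrite (generated_deg0 F_free Geny) (bil0r brF_bil) => _; exists 0; case: zero_witness.
- by exists 0; case: zero_witness.
- move=> e2; have [w1 Dx Tw1] := IHx e2; have [w2 Dy Tw2] := IHy e2.
  exists (c *: w1 + w2); first by rewrite D_lin Dx Dy iota_lin pi_lin.
  by rewrite Theta_lin Tw1 Tw2 scaler0 addr0.
Qed.

Lemma Kdeg_ge2 i k : Kd i k -> (2 <= i)%N.
Proof.
elim=> {i k} [// | j m f k _ le2m _ _ _ | i le3i | i c x y le3i _ _ _ _].
- by rewrite (leq_trans le2m) ?leq_addl.
- exact: ltnW.
- exact: ltnW.
Qed.

Lemma Kdeg_homog i k : Kd i k -> GF i k.
Proof.
elim=> {i k} [x [W [_ _ W_sub Wx]] | j m f k _ _ GFf _ GFk | i _ | i c x y _ _ GFx _ GFy].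
- by case: (W_sub _ Wx).
- exact: (gLie_deg F_Lie GFf GFk).
- exact: (grading0 GF_grading).
- by apply: subspace_comb => //; apply: (grading_subspace GF_grading).
Qed.

Lemma Kdeg0 i : (2 <= i)%N -> Kd i 0.
Proof.
case: (ltngtP i 2) => // [lt2i | ->] _; first exact: Kdeg_zero.
apply: Kdeg_two; exists (fun w => w = 0); split => //.
- by split=> // c x y -> ->; rewrite scaler0 addr0.
- by move=> a w ->; exact: (lin0 (rhoF_lin rhoF_ext a)).
- move=> w ->; split; first exact: (grading0 GF_grading).
  by exists 0%N, (fun _ => 0), (fun _ => 0), (fun _ => 0); rewrite !big_ord0.
Qed.

Lemma pi_Kdeg i k : Kd i k -> pi k = 0.
Proof.
move=> Kk; have le2i := Kdeg_ge2 Kk; apply/pi_eq0.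
exists i.+1, (fun j => if j == i then k else 0); split.
  by move=> j le2j; case: eqP => [->|_] //; apply: Kdeg0.
rewrite big_nat_recr ?(ltnW le2i) //= eqxx big_nat_cond big1 ?add0r //.
by move=> j /andP [/andP [_ ltji] _]; rewrite ifN // ltn_eqF.
Qed.

Lemma two_sym u v : circ u v + circ v u = 2 *: sym_bracket circ u v.
Proof. by rewrite /sym_bracket scalerA mulfV // scale1r. Qed.

Lemma D_Kdeg i k : Kd i k -> D k = 0.
Proof.
elim=> {i k} [x K2x | j m f k _ le2m _ Kk IH | i _ | i c x y _ _ Dx _ Dy].
- case: K2x => W [_ _ W_sub Wx]; case: (W_sub _ Wx) => _ [n [c [xs [ys [-> sym0]]]]].
  rewrite (lin_sum D_lin).
  transitivity (tau (2 *: \sum_(k < n) c k *: sym_bracket circ (xs k) (ys k))).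
    rewrite scaler_sumr (lin_sum iota_lin) (lin_sum pi_lin); apply: eq_bigr => k _.
    rewrite (linZ D_lin) D_iota_iota scalerA mulrC -scalerA -two_sym.
    by rewrite (linZ iota_lin) (linZ pi_lin).
  by rewrite sym0 scaler0 (lin0 iota_lin) (lin0 pi_lin).
- rewrite D_br (pi_Kdeg Kk) IH !(bil0r brT_bil) (lin0 (rhoV_lin _)).
  rewrite (Vcomp_deg (Kdeg_homog Kk)); last by move=> em; rewrite em in le2m.
  by rewrite rhoV0 !addr0 subr0.
- exact: (lin0 D_lin).
- by rewrite D_lin Dx Dy scaler0 addr0.
Qed.

Lemma D_Kbullet x : Kbullet circ brF GF iota rhoF x -> D x = 0.
Proof.
case=> n [xs [Kxs ->]]; rewrite (lin_sum D_lin) big1_seq // => i /andP [_].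
by rewrite mem_index_iota => /andP [le2i _]; exact: (D_Kdeg (Kxs i le2i)).
Qed.

Definition lift (t : T) : F := projT1 (constructive_indefinite_description _ (pi_surj t)).
Lemma liftK t : pi (lift t) = t.
Proof. exact: projT2 (constructive_indefinite_description _ (pi_surj t)). Qed.

Definition d (t : T) : T := D (lift t).

Lemma d_pi x : d (pi x) = D x.
Proof.
have : pi (lift (pi x) - x) = 0 by rewrite (linB pi_lin) liftK subrr.
by move/pi_eq0/D_Kbullet/eqP; rewrite (linB D_lin) subr_eq0 => /eqP.
Qed.

Lemma d_lin : linear_map d.
Proof.
move=> c X Y; have [x <-] := pi_surj X; have [y <-] := pi_surj Y.
by rewrite -pi_lin !d_pi D_lin.
Qed.

Lemma d_deg1 X : GT 1 X -> d X = 0.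
Proof.
by move=> /pi_lift_homog [x [GFx <-]]; rewrite d_pi; apply: (grading_deg0 GT_grading (D_deg GFx)).
Qed.

Lemma d_tau v : d (tau v) = 0. Proof. exact: d_deg1 (tau_deg v). Qed.

Lemma d_deg i X : GT i.+1 X -> GT i (d X).
Proof. by move=> /pi_lift_homog [x [GFx <-]]; rewrite d_pi; apply: (D_deg GFx). Qed.

Lemma d_tau_tau u v : d (brT (tau u) (tau v)) = tau (circ u v + circ v u).
Proof. by rewrite -pi_br d_pi D_iota_iota. Qed.

Lemma d_tau_br u i X : (2 <= i)%N -> GT i X ->
  d (brT (tau u) X) = rhoT (Theta u) X - brT (tau u) (d X).
Proof. by move=> le2i /pi_lift_homog [y [GFy <-]]; rewrite -pi_br !d_pi (D_iota_br u GFy). Qed.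

Lemma d_br_br i j X Y : (2 <= i)%N -> (2 <= j)%N -> GT i X -> GT j Y ->
  d (brT X Y) = brT (d X) Y + sgn i *: brT X (d Y).
Proof.
move=> le2i le2j /pi_lift_homog [x [GFx <-]] /pi_lift_homog [y [GFy <-]].
by rewrite -pi_br !d_pi (D_br_br GFx GFy).
Qed.

Lemma d_deg2 X : GT 2 X -> exists2 w, d X = tau w & Theta w = 0.
Proof.
move=> /pi_lift_homog [x [GFx <-]]; rewrite d_pi.
exact: (D_deg2 (homog_generated F_free GFx)).
Qed.

Lemma T_bracket_ind (Q : T -> Prop) :
  Q 0 -> (forall c X Y, Q X -> Q Y -> Q (c *: X + Y)) ->
  (forall u, Q (tau u)) ->
  (forall u v, Q (brT (tau u) (tau v))) ->
  (forall u j Y, (2 <= j)%N -> GT j Y -> Q Y -> Q (brT (tau u) Y)) ->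
  (forall i j X Y, (2 <= i)%N -> (2 <= j)%N -> GT i X -> GT j Y -> Q X -> Q Y -> Q (brT X Y)) ->
  forall t, Q t.
Proof.
move=> Q0 Qcomb Qtau Qtau_tau Qtau_br Qbr_br t; have [x <-] := pi_surj t; move: x.
apply: (free_ind F_free) => [||//|i j x y Genx Geny Qx Qy].
- by rewrite (lin0 pi_lin).
- by move=> c x y Qx Qy; rewrite pi_lin; apply: Qcomb.
have GTx := pi_deg (generated_homog F_free Genx).
have GTy := pi_deg (generated_homog F_free Geny).
rewrite pi_br; case: i Genx GTx Qx => [|[|i]] Genx GTx Qx.
- by rewrite (generated_deg0 F_free Genx) (lin0 pi_lin) (bil0l brT_bil).
- have [u ->] := generated_deg1 F_free Genx.
  case: j Geny GTy Qy => [|[|j]] Geny GTy Qy.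
  + by rewrite (generated_deg0 F_free Geny) (lin0 pi_lin) (bil0r brT_bil).
  + by have [v ->] := generated_deg1 F_free Geny.
  + exact: Qtau_br GTy Qy.
- case: j Geny GTy Qy => [|[|j]] Geny GTy Qy.
  + by rewrite (generated_deg0 F_free Geny) (lin0 pi_lin) (bil0r brT_bil).
  + have [v ev] := generated_deg1 F_free Geny; rewrite ev in GTy *.
    rewrite (gLie_anti T_Lie GTx GTy) -scaleNr -[X in Q X]addr0.
    by apply: Qcomb => //; apply: Qtau_br GTx Qx.
  + exact: Qbr_br GTx GTy Qx Qy.
Qed.

Section Equivariance.
Variable w : V.
Local Notation a := (Theta w).

Lemma d_rhoT_tau_br u j Y : (2 <= j)%N -> GT j Y ->
  d (rhoT a Y) = rhoT a (d Y) -> d (rhoT a (brT (tau u) Y)) = rhoT a (d (brT (tau u) Y)).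
Proof.
move=> le2j GTY IH; have GTaY := rhoT_deg a GTY.
rewrite rhoT_der rhoT_tau (linD d_lin) (d_tau_br (circ w u) le2j GTY).
rewrite (d_tau_br u le2j GTaY) (d_tau_br u le2j GTY) IH.
rewrite (linB (rhoT_lin _)) rhoT_der rhoT_tau (LL_Theta_circ LL) rhoT_br !opprD !addrA.
by rewrite (ACl (1*3*5*4*2))%AC /= addrK.
Qed.

Lemma d_rhoT X : d (rhoT a X) = rhoT a (d X).
Proof.
have rhoT0 := lin0 (rhoT_lin a).
move: X; apply: T_bracket_ind.
- by rewrite rhoT0 (lin0 d_lin) rhoT0.
- by move=> c X Y IHX IHY; rewrite rhoT_lin d_lin IHX IHY d_lin rhoT_lin.
- by move=> v; rewrite rhoT_tau !d_tau rhoT0.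
- move=> u v; rewrite rhoT_der !rhoT_tau (linD d_lin) !d_tau_tau rhoT_tau.
  rewrite -(linD pi_lin) -(linD iota_lin) (bilDr (LL_circ_bil LL)).
  rewrite (LL_leibniz LL w u) (LL_leibniz LL w v) !addrA.
  by rewrite (ACl (1*3*4*2))%AC.
- exact: d_rhoT_tau_br.
- move=> i j X Y le2i le2j GTX GTY IHX IHY.
  have GTaX := rhoT_deg a GTX; have GTaY := rhoT_deg a GTY.
  rewrite rhoT_der (linD d_lin) (d_br_br _ _ GTaX GTY) // (d_br_br _ _ GTX GTaY) //.
  rewrite (d_br_br _ _ GTX GTY) // IHX IHY (linD (rhoT_lin _)) (linZ (rhoT_lin _)).
  by rewrite !rhoT_der scalerDr !addrA (ACl (1*3*2*4))%AC.
Qed.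

End Equivariance.

Section Uniqueness.
Variable d' : T -> T.
Hypothesis d'_tower : is_tower_differential circ Theta brT GT (fun v => tau v) rhoT d'.

Lemma tower_unique X : d' X = d X.
Proof.
case: d'_tower => d'_lin [d'_deg1 [_ [_ [d'_tau_tau [d'_tau_br d'_br_br]]]]].
move: X; apply: T_bracket_ind.
- by rewrite (lin0 d'_lin) (lin0 d_lin).
- by move=> c X Y IHX IHY; rewrite d'_lin d_lin IHX IHY.
- by move=> v; rewrite d'_deg1 ?d_tau //; apply: tau_deg.
- by move=> u v; rewrite d'_tau_tau d_tau_tau two_sym.
- by move=> u j Y le2j GTY IHY; rewrite (d'_tau_br _ _ _ le2j GTY) (d_tau_br _ le2j GTY) IHY.
- move=> i j X Y le2i le2j GTX GTY IHX IHY.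
  by rewrite (d'_br_br _ _ _ _ le2i le2j GTX GTY) (d_br_br le2i le2j GTX GTY) IHX IHY.
Qed.

End Uniqueness.

Lemma dd_tau_br u j Y : (2 <= j)%N -> GT j Y -> d (d Y) = 0 -> d (d (brT (tau u) Y)) = 0.
Proof.
move=> le2j GTY ddY; rewrite (d_tau_br u le2j GTY) (linB d_lin) d_rhoT.
case: j le2j GTY => [|[|[|j]]] // _ GTY.
- have [w -> Thw] := d_deg2 GTY.
  by rewrite d_tau_tau rhoT_tau (LL_circE LL w) Thw (bil0l act_bil) addr0 subrr.
- by rewrite (d_tau_br u _ (d_deg GTY)) // ddY (bil0r brT_bil) subr0 subrr.
Qed.

Lemma d_br_d_left i j X Y : (2 <= i)%N -> (2 <= j)%N -> GT i X -> GT j Y -> d (d X) = 0 ->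
  d (brT (d X) Y) = sgn i.-1 *: brT (d X) (d Y).
Proof.
case: i => [|[|[|i]]] // _ le2j GTX GTY ddX.
- have [w -> Thw] := d_deg2 GTX.
  by rewrite (d_tau_br w le2j GTY) (rhoT_ker _ Thw) add0r expr1 scaleN1r.
- by rewrite (d_br_br _ le2j (d_deg GTX) GTY) // ddX (bil0l brT_bil) add0r.
Qed.

Lemma d_br_d_right i j X Y : (2 <= i)%N -> (2 <= j)%N -> GT i X -> GT j Y -> d (d Y) = 0 ->
  d (brT X (d Y)) = brT (d X) (d Y).
Proof.
case: i => [|[|i]] //; case: j => [|[|[|j]]] // _ _ GTX GTY ddY.
- have [w -> Thw] := d_deg2 GTY.
  rewrite (gLie_anti T_Lie GTX (tau_deg w)) (linN d_lin) (linZ d_lin) (d_tau_br w _ GTX) //.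
  rewrite (rhoT_ker _ Thw) sub0r (gLie_anti T_Lie (tau_deg w) (d_deg GTX)) muln1 mul1n.
  by rewrite opprK scalerA exprS mulN1r mulNr sign_mulK scaleN1r opprK.
- by rewrite (d_br_br _ _ GTX (d_deg GTY)) // ddY (bil0r brT_bil) scaler0 addr0.
Qed.

Lemma dd_br_br i j X Y : (2 <= i)%N -> (2 <= j)%N -> GT i X -> GT j Y ->
  d (d X) = 0 -> d (d Y) = 0 -> d (d (brT X Y)) = 0.
Proof.
move=> le2i le2j GTX GTY ddX ddY.
rewrite (d_br_br le2i le2j GTX GTY) (linD d_lin) (linZ d_lin).
rewrite (d_br_d_left le2i le2j GTX GTY ddX) (d_br_d_right le2i le2j GTX GTY ddY).
by case: i le2i {GTX ddX} => // i _; rewrite exprS mulN1r scaleNr addrN.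
Qed.

Lemma dd X : d (d X) = 0.
Proof.
have d0 := lin0 d_lin.
move: X; apply: T_bracket_ind.
- by rewrite !d0.
- by move=> c X Y ddX ddY; rewrite !d_lin ddX ddY scaler0 addr0.
- by move=> v; rewrite d_tau d0.
- by move=> u v; rewrite d_tau_tau d_tau.
- exact: dd_tau_br.
- exact: dd_br_br.
Qed.

Lemma d_tower : is_tower_differential circ Theta brT GT (fun v => tau v) rhoT d.
Proof.
split; first exact: d_lin.
split; first exact: d_deg1.
split; first by move=> i X _; apply: d_deg.
split; first by move=> w i X _ _; apply: d_rhoT.
split; first by move=> u v; rewrite d_tau_tau two_sym.
split; first by move=> u i X; apply: d_tau_br.
by move=> i j X Y; apply: d_br_br.
Qed.

End TowerDifferential.

Theorem mainTheorem7
  (K : fieldType) (char0 : [pchar K] =i pred0)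
  (g V : lmodType K) (brg : g -> g -> g) (act : g -> V -> V)
  (circ : V -> V -> V) (Theta : V -> g)
  (HLL : is_Lie_Leibniz_triple brg act circ Theta)
  (F : lmodType K) (brF : F -> F -> F) (GF : nat -> F -> Prop) (iota : V -> F)
  (Hfree : is_free_graded_Lie brF GF iota)
  (rhoF : g -> F -> F) (HrhoF : derivation_extension act brF GF iota rhoF)
  (T : lmodType K) (brT : T -> T -> T) (GT : nat -> T -> Prop)
  (HT : is_neg_graded_Lie brT GT)
  (pi : F -> T) (Hpi : is_graded_quotient brF GF brT GT pi (Kbullet circ brF GF iota rhoF))
  (rhoT : g -> T -> T) (HrhoT : forall a x, pi (rhoF a x) = rhoT a (pi x)) :
  exists d : T -> T,
    [/\ is_tower_differential circ Theta brT GT (fun v => pi (iota v)) rhoT d,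
        (forall d' : T -> T,
           is_tower_differential circ Theta brT GT (fun v => pi (iota v)) rhoT d' ->
           forall x, d' x = d x) &
        (forall i x, (1 <= i)%N -> GT i.+2 x -> d (d x) = 0)].
Proof.
have two_neq0 : (2 : K) != 0 by rewrite ((GRing.pcharf0P K).1 char0 2).
exists (d HLL Hfree HrhoF HT Hpi HrhoT); split.
- exact: d_tower.
- by move=> d' d'_tower x; apply: (tower_unique two_neq0).
- by move=> i x _ _; apply: dd.
Qed.
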